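(* Every basis $B$ for $\mathbb{Z}$ can be written in the form $B=\{d_1,\,2d_2,\,2^2d_3,\,2^3d_4,\dots\}$, where all the integers $d_1,d_2,\dots$ are odd. Equivalently, for every $j\ge 0$, $B$ contains exactly one element $b$ such that $2^j$ divides $b$ and $2^{j+1}$ does not divide $b$, and $B$ contains no other elements.
   Context: A set of integers $B=\{b_1,b_2,\dots\}$, with the $b_i$ pairwise distinct, is a basis for $\mathbb{Z}$ if every $x\in\mathbb{Z}$ can be written in exactly one way as $x=\sum_{i\ge1}\epsilon_i b_i$ with every $\epsilon_i\in\{0,1\}$ and $\sum_i\epsilon_i<\infty$. *)

From Stdlib Require Import ZArith List.
Open Scope Z_scope.

Definition zsum (l : list Z) : Z := fold_right Z.add 0 l.

(* A finite subset S of B (given as a duplicate-free list) representing x,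
   i.e. x = sum of the elements of S (eps_i = 1 exactly for b_i in S). *)
Definition represents (B : Z -> Prop) (S : list Z) (x : Z) : Prop :=
  NoDup S /\ (forall b, In b S -> B b) /\ zsum S = x.

(* B (a set of integers, so its elements are pairwise distinct) is a basis
   for Z: every integer x is a finite subset-sum of B in exactly one way
   (two representing subsets have the same elements). *)
Definition is_basis (B : Z -> Prop) : Prop :=
  forall x : Z,
    (exists S, represents B S x) /\
    (forall S T, represents B S x -> represents B T x ->
                 forall b, In b S <-> In b T).

From Stdlib Require Import ZArith List Lia Bool ClassicalEpsilon FinFun.
Open Scope Z_scope.

(* The heart of the proof is that a basis contains exactly one odd element.
   Existence: some representation of 1 must contain an odd element.
   Uniqueness is a counting argument.  Fix, via choice, the representation
   rep x of every x, and for c in B let mem c x say whether c occurs in it.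
   Removing c from, or adding c to, a representation shows that mem c x flips
   when x is shifted by c, so mem c is 2c-periodic.  For distinct a, b in B
   exactly one of x, x - a, x - b, x - a - b has a representation avoiding both
   a and b; the indicator of "avoids a and b" is N-periodic for
   N = 2(ab)^2, so summing over one period gives 4 * (count) = N, i.e.
   (ab)^2 is even, and a, b cannot both be odd.

   With a unique odd element o, every representation of an even number avoids o
   and so consists of even numbers; hence {c | 2c in B} is again a basis.
   Iterating, for each i there is exactly one odd d with 2^i d in B, and since
   0 is not in B and every nonzero integer is 2^i times an odd number, these
   elements exhaust B. *)

Lemma zsum_remove (S : list Z) (c : Z) :
  NoDup S -> In c S -> zsum S = c + zsum (remove Z.eq_dec c S).
Proof.
  induction S as [|x S IH]; simpl; intros Hnd Hin; [contradiction|].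
  inversion Hnd as [|? ? Hx Hnd']; subst.
  destruct (Z.eq_dec c x) as [->|Hne].
  - rewrite notin_remove by exact Hx. lia.
  - destruct Hin as [->|Hin]; [congruence|]. simpl. rewrite (IH Hnd' Hin). lia.
Qed.

Lemma NoDup_remove_elt (S : list Z) (c : Z) : NoDup S -> NoDup (remove Z.eq_dec c S).
Proof.
  induction S as [|x S IH]; simpl; intros Hnd; [constructor|].
  inversion Hnd; subst. destruct (Z.eq_dec c x); auto.
  constructor; auto. intros Hin. apply in_remove in Hin. tauto.
Qed.

Lemma zsum_even (S : list Z) : (forall c, In c S -> Z.Even c) -> Z.Even (zsum S).
Proof.
  induction S as [|x S IH]; simpl; intros Hev; [now exists 0|].
  destruct (Hev x (or_introl eq_refl)) as [p ->].
  destruct IH as [q ->]; [intros; apply Hev; auto|]. exists (p + q). ring.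
Qed.

Lemma zsum_double (S : list Z) : zsum (map (Z.mul 2) S) = 2 * zsum S.
Proof.
  unfold zsum. induction S as [|x S IH]; cbn [map fold_right]; [reflexivity|].
  rewrite IH. ring.
Qed.

Lemma all_even_double (S : list Z) :
  (forall c, In c S -> Z.Even c) -> exists S', S = map (Z.mul 2) S'.
Proof.
  induction S as [|x S IH]; intros Hev; [now exists nil|].
  destruct (Hev x (or_introl eq_refl)) as [p ->].
  destruct IH as [S' ->]; [intros; apply Hev; simpl; auto|].
  now exists (p :: S').
Qed.

Lemma represents_cons (B : Z -> Prop) (S : list Z) (x c : Z) :
  represents B S x -> B c -> ~ In c S -> represents B (c :: S) (x + c).
Proof.
  intros [Hnd [HB Hsum]] Hc Hnin. split; [constructor; auto|split].
  - intros z [<-|Hz]; auto.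
  - cbn [zsum fold_right]. fold (zsum S). lia.
Qed.

Lemma represents_remove (B : Z -> Prop) (S : list Z) (x c : Z) :
  represents B S x -> In c S -> represents B (remove Z.eq_dec c S) (x - c).
Proof.
  intros [Hnd [HB Hsum]] Hc. split; [now apply NoDup_remove_elt|split].
  - intros z Hz. apply in_remove in Hz. apply HB; tauto.
  - rewrite (zsum_remove S c Hnd Hc) in Hsum. lia.
Qed.

Section RepresentationFunction.
Variable B : Z -> Prop.
Hypothesis hB : is_basis B.

Definition rep (x : Z) : list Z :=
  proj1_sig (constructive_indefinite_description _ (proj1 (hB x))).

Lemma rep_spec (x : Z) : represents B (rep x) x.
Proof. exact (proj2_sig (constructive_indefinite_description _ (proj1 (hB x)))). Qed.

Definition mem (c x : Z) : bool := if in_dec Z.eq_dec c (rep x) then true else false.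

Lemma mem_represents (S : list Z) (c x : Z) :
  represents B S x -> (mem c x = true <-> In c S).
Proof.
  intros HS. rewrite (proj2 (hB x) S (rep x) HS (rep_spec x) c).
  unfold mem. destruct (in_dec Z.eq_dec c (rep x)); split; congruence || tauto.
Qed.

Lemma mem_sub (c d x : Z) :
  mem c x = true -> mem d (x - c) = (mem d x && negb (d =? c)).
Proof.
  intros Hc. apply (mem_represents _ c x (rep_spec x)) in Hc.
  pose proof (represents_remove B _ _ _ (rep_spec x) Hc) as HR.
  apply eq_true_iff_eq. rewrite andb_true_iff, negb_true_iff, Z.eqb_neq.
  rewrite (mem_represents _ d _ HR), (mem_represents _ d _ (rep_spec x)).
  split; [intros Hd; apply in_remove in Hd; tauto|intros [Hd Hne]; now apply in_in_remove].
Qed.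

Lemma mem_add (c d x : Z) :
  B c -> mem c x = false -> mem d (x + c) = ((d =? c) || mem d x).
Proof.
  intros HBc Hc. assert (Hnin : ~ In c (rep x)).
  { rewrite <- (mem_represents _ c x (rep_spec x)). congruence. }
  pose proof (represents_cons B _ _ _ (rep_spec x) HBc Hnin) as HR.
  apply eq_true_iff_eq. rewrite orb_true_iff, Z.eqb_eq.
  rewrite (mem_represents _ d _ HR), (mem_represents _ d _ (rep_spec x)).
  simpl. split; intros [H|H]; auto.
Qed.

Lemma mem_flip (c x : Z) : B c -> mem c (x - c) = negb (mem c x).
Proof.
  intros HBc. destruct (mem c x) eqn:Hx.
  - rewrite (mem_sub c c x Hx), Z.eqb_refl. apply andb_false_r.
  - destruct (mem c (x - c)) eqn:Hy; [reflexivity|].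
    pose proof (mem_add c c (x - c) HBc Hy) as Hback.
    rewrite Z.sub_add, Z.eqb_refl, Hx in Hback. discriminate.
Qed.

Lemma mem_periodic (c k x : Z) : B c -> mem c (x + 2 * c * k) = mem c x.
Proof.
  intros HBc.
  assert (Hstep : forall y, mem c (y + 2 * c) = mem c y).
  { intros y. pose proof (mem_flip c (y + 2 * c) HBc) as F2.
    pose proof (mem_flip c (y + c) HBc) as F1.
    replace (y + 2 * c - c) with (y + c) in F2 by ring.
    replace (y + c - c) with y in F1 by ring.
    now rewrite F1, F2, negb_involutive. }
  revert x. induction k using Z.peano_ind; intros x.
  - now rewrite Z.mul_0_r, Z.add_0_r.
  - replace (x + 2 * c * Z.succ k) with (x + 2 * c * k + 2 * c) by ring.
    now rewrite Hstep.
  - rewrite <- (Hstep (x + 2 * c * Z.pred k)).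
    replace (x + 2 * c * Z.pred k + 2 * c) with (x + 2 * c * k) by (unfold Z.pred; ring).
    apply IHk.
Qed.

Definition pick (e : bool) (c : Z) : Z := if e then c else 0.

Lemma mem_strip_self (c x : Z) : mem c (x - pick (mem c x) c) = false.
Proof.
  destruct (mem c x) eqn:Hx; cbn [pick].
  - now rewrite (mem_sub c c x Hx), Z.eqb_refl, andb_false_r.
  - now rewrite Z.sub_0_r.
Qed.

Lemma mem_strip_other (c d x : Z) : d <> c -> mem d (x - pick (mem c x) c) = mem d x.
Proof.
  intros Hdc. destruct (mem c x) eqn:Hx; cbn [pick].
  - rewrite (mem_sub c d x Hx). apply Z.eqb_neq in Hdc. now rewrite Hdc, andb_true_r.
  - now rewrite Z.sub_0_r.
Qed.

Lemma mem_put_self (c y : Z) (e : bool) :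
  B c -> mem c y = false -> mem c (y + pick e c) = e.
Proof.
  intros HBc Hy. destruct e; cbn [pick].
  - now rewrite (mem_add c c y HBc Hy), Z.eqb_refl.
  - now rewrite Z.add_0_r.
Qed.

Lemma mem_put_other (c d y : Z) (e : bool) :
  B c -> mem c y = false -> d <> c -> mem d (y + pick e c) = mem d y.
Proof.
  intros HBc Hy Hdc. destruct e; cbn [pick].
  - rewrite (mem_add c d y HBc Hy). now apply Z.eqb_neq in Hdc as ->.
  - now rewrite Z.add_0_r.
Qed.

Definition avoids (a b x : Z) : bool := negb (mem a x) && negb (mem b x).

Lemma avoids_iff (a b x : Z) (ea eb : bool) : B a -> B b -> a <> b ->
  avoids a b (x - pick ea a - pick eb b) = eqb (mem a x) ea && eqb (mem b x) eb.
Proof.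
  intros HBa HBb Hab. apply eq_true_iff_eq.
  unfold avoids. rewrite !andb_true_iff, !negb_true_iff, !eqb_true_iff. split.
  - set (y := x - pick ea a - pick eb b). intros [Ha Hb].
    replace x with (y + pick ea a + pick eb b) by (unfold y; ring).
    rewrite (mem_put_self b _ eb HBb), (mem_put_other b a _ eb HBb); auto;
      rewrite ?(mem_put_self a _ ea HBa), ?(mem_put_other a b _ ea HBa); auto.
  - intros [<- <-].
    set (x1 := x - pick (mem a x) a).
    rewrite <- (mem_strip_other a b x) by congruence. fold x1.
    split; [|apply mem_strip_self].
    rewrite (mem_strip_other b a x1 Hab). apply mem_strip_self.
Qed.

Lemma avoids_four (a b x : Z) : B a -> B b -> a <> b ->
  Z.b2z (avoids a b x) + Z.b2z (avoids a b (x - a)) + Z.b2z (avoids a b (x - b))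
  + Z.b2z (avoids a b (x - a - b)) = 1.
Proof.
  intros HBa HBb Hab.
  pose proof (avoids_iff a b x false false HBa HBb Hab) as E00.
  pose proof (avoids_iff a b x true false HBa HBb Hab) as E10.
  pose proof (avoids_iff a b x false true HBa HBb Hab) as E01.
  pose proof (avoids_iff a b x true true HBa HBb Hab) as E11.
  cbn [pick] in *. rewrite !Z.sub_0_r in *. replace (x - 0 - b) with (x - b) in E01 by ring.
  rewrite E00, E10, E01, E11. now destruct (mem a x), (mem b x).
Qed.

(* Avoiding a and b is periodic with period 2(ab)^2, a common multiple of 2a
   and 2b. *)
Lemma avoids_periodic (a b x : Z) : B a -> B b ->
  avoids a b (x + 2 * (a * b) * (a * b)) = avoids a b x.
Proof.
  intros HBa HBb. unfold avoids.
  replace (x + 2 * (a * b) * (a * b)) with (x + 2 * a * (a * b * b)) at 1 by ring.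
  replace (x + 2 * (a * b) * (a * b)) with (x + 2 * b * (a * a * b)) by ring.
  now rewrite !mem_periodic.
Qed.

End RepresentationFunction.

Fixpoint sum_range (g : Z -> Z) (n : nat) : Z :=
  match n with
  | O => 0
  | S n => sum_range g n + g (Z.of_nat n)
  end.

Lemma sum_range_ext (g h : Z -> Z) (n : nat) :
  (forall x, g x = h x) -> sum_range g n = sum_range h n.
Proof. intros Hgh. induction n as [|n IH]; cbn; [reflexivity|]. now rewrite IH, Hgh. Qed.

Lemma sum_range_add (g h : Z -> Z) (n : nat) :
  sum_range (fun x => g x + h x) n = sum_range g n + sum_range h n.
Proof. induction n as [|n IH]; cbn; [reflexivity|]. rewrite IH. ring. Qed.

Lemma sum_range_const (c : Z) (n : nat) : sum_range (fun _ => c) n = c * Z.of_nat n.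
Proof. induction n as [|n IH]; cbn [sum_range]; [ring|]. rewrite IH, Nat2Z.inj_succ. ring. Qed.

Lemma sum_range_shift1 (g : Z -> Z) (n : nat) :
  sum_range (fun x => g (x + 1)) n = sum_range g n - g 0 + g (Z.of_nat n).
Proof.
  induction n as [|n IH]; cbn [sum_range]; [simpl; ring|]. rewrite IH.
  replace (Z.of_nat n + 1) with (Z.of_nat (S n)) by lia. ring.
Qed.

Lemma sum_range_shift (g : Z -> Z) (n : nat) :
  (forall x, g (x + Z.of_nat n) = g x) ->
  forall c, sum_range (fun x => g (x + c)) n = sum_range g n.
Proof.
  intros Hper.
  assert (Hstep : forall c, sum_range (fun x => g (x + (c + 1))) n
                            = sum_range (fun x => g (x + c)) n).
  { intros c. rewrite (sum_range_ext _ (fun x => g (x + 1 + c))) by (intros; f_equal; ring).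
    rewrite (sum_range_shift1 (fun x => g (x + c))), Z.add_0_l.
    replace (Z.of_nat n + c) with (c + Z.of_nat n) by ring. rewrite Hper. ring. }
  intros c. induction c using Z.peano_ind.
  - apply sum_range_ext. intros x. now rewrite Z.add_0_r.
  - now rewrite <- Z.add_1_r, Hstep.
  - rewrite <- IHc, <- (Hstep (Z.pred c)), Z.add_1_r, Z.succ_pred. reflexivity.
Qed.

(* A basis contains at most one odd element: for distinct odd a, b, summing
   avoids_four over one period N = 2(ab)^2 gives 4 * (number of avoiding x) = N,
   which would make the odd number (ab)^2 even. *)
Lemma basis_unique_odd (B : Z -> Prop) (hB : is_basis B) (a b : Z) :
  B a -> B b -> Z.Odd a -> Z.Odd b -> a = b.
Proof.
  intros HBa HBb Hoa Hob. destruct (Z.eq_dec a b) as [|Hab]; [assumption|exfalso].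
  set (f := fun x => Z.b2z (avoids B hB a b x)).
  set (N := 2 * (a * b) * (a * b)).
  set (n := Z.to_nat N).
  assert (Hn : Z.of_nat n = N) by (unfold n, N; nia).
  assert (Hper : forall x, f (x + Z.of_nat n) = f x)
    by (intros x; unfold f; rewrite Hn; now rewrite avoids_periodic).
  assert (Hcount : sum_range (fun x => f x + f (x + - a) + f (x + - b) + f (x + (- a - b))) n
                   = sum_range (fun _ => 1) n).
  { apply sum_range_ext. intros x. unfold f.
    replace (x + (- a - b)) with (x - a - b) by ring. rewrite !Z.add_opp_r.
    exact (avoids_four B hB a b x HBa HBb Hab). }
  rewrite !sum_range_add, !(sum_range_shift f n Hper), sum_range_const, Hn in Hcount.
  assert (Hodd : Z.Odd (a * b * (a * b))).
  { apply Z.odd_spec. apply Z.odd_spec in Hoa, Hob. now rewrite !Z.odd_mul, Hoa, Hob. }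
  assert (HN : N = 2 * (a * b * (a * b))) by (unfold N; ring).
  assert (Heven : Z.Even (a * b * (a * b))) by (exists (sum_range f n); clearbody N; lia).
  exact (Z.Even_Odd_False _ Heven Hodd).
Qed.

(* 0 is not a basis element, otherwise 0 would have two representations. *)
Lemma basis_not_zero (B : Z -> Prop) (hB : is_basis B) : ~ B 0.
Proof.
  intros H0.
  assert (Hnil : represents B nil 0) by (repeat split; [constructor|intros ? []]).
  assert (Hzero : represents B (0 :: nil) 0).
  { repeat split; [repeat constructor; intros []|intros ? [<-|[]]; exact H0]. }
  apply (proj2 (hB 0) _ _ Hnil Hzero 0). now left.
Qed.

(* A basis contains an odd element, since some representation of 1 does. *)
Lemma basis_has_odd (B : Z -> Prop) (hB : is_basis B) : exists o, B o /\ Z.Odd o.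
Proof.
  destruct (proj1 (hB 1)) as [S [_ [HBS Hsum]]].
  destruct (classic (exists o, In o S /\ Z.Odd o)) as [[o [Ho Hodd]]|Hnone].
  - exists o. auto.
  - exfalso. apply (Z.Even_Odd_False 1); [|now exists 0].
    rewrite <- Hsum. apply zsum_even. intros c Hc.
    destruct (Z.Even_or_Odd c) as [|Hodd]; [assumption|]. exfalso. eauto.
Qed.

(* A representation of an even number contains no odd element: the unique
   odd element together with even ones would have an odd sum. *)
Lemma represents_even_all_even (B : Z -> Prop) (hB : is_basis B) (S : list Z) (x : Z) :
  represents B S (2 * x) -> forall c, In c S -> Z.Even c.
Proof.
  intros [Hnd [HBS Hsum]] c Hc.
  destruct (Z.Even_or_Odd c) as [|Hoc]; [assumption|exfalso].
  assert (Hrest : Z.Even (zsum (remove Z.eq_dec c S))).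
  { apply zsum_even. intros d Hd. apply in_remove in Hd as [Hd Hdc].
    destruct (Z.Even_or_Odd d) as [|Hod]; [assumption|].
    exfalso. apply Hdc, (basis_unique_odd B hB); auto. }
  rewrite (zsum_remove S c Hnd Hc) in Hsum.
  destruct Hrest as [p Hp]. destruct Hoc as [q Hq]. lia.
Qed.

Lemma in_map_double (z : Z) (S : list Z) : In (2 * z) (map (Z.mul 2) S) <-> In z S.
Proof.
  rewrite in_map_iff. split.
  - intros [y [Hy Hin]]. now replace z with y by lia.
  - intros Hin. now exists z.
Qed.

Lemma represents_double (B : Z -> Prop) (S : list Z) (x : Z) :
  represents B (map (Z.mul 2) S) (2 * x) <-> represents (fun c => B (2 * c)) S x.
Proof.
  assert (Hinj : Injective (Z.mul 2)) by (intros u v; lia).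
  unfold represents. rewrite zsum_double. split.
  - intros [Hnd [HBS Hsum]]. repeat split.
    + exact (NoDup_map_inv _ _ Hnd).
    + intros c Hc. apply HBS, in_map_double, Hc.
    + lia.
  - intros [Hnd [HBS Hsum]]. repeat split.
    + exact (Injective_map_NoDup Hinj Hnd).
    + intros c Hc. apply in_map_iff in Hc as [y [<- Hy]]. auto.
    + lia.
Qed.

Lemma basis_halve (B : Z -> Prop) (hB : is_basis B) : is_basis (fun c => B (2 * c)).
Proof.
  intros x. split.
  - destruct (proj1 (hB (2 * x))) as [S HS].
    destruct (all_even_double S (represents_even_all_even B hB S x HS)) as [S' ->].
    exists S'. now apply represents_double.
  - intros S T HS HT z.
    apply represents_double in HS, HT.
    rewrite <- (in_map_double z S), <- (in_map_double z T).
    exact (proj2 (hB (2 * x)) _ _ HS HT (2 * z)).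
Qed.

Lemma basis_level (i : nat) : forall B : Z -> Prop, is_basis B ->
  exists! d, Z.Odd d /\ B (2 ^ Z.of_nat i * d).
Proof.
  induction i as [|i IH]; intros B hB.
  - assert (Hpow : forall z, 2 ^ Z.of_nat 0 * z = z)
      by (intros z; change (2 ^ Z.of_nat 0) with 1; apply Z.mul_1_l).
    destruct (basis_has_odd B hB) as [o [HBo Hodd]]. exists o. split.
    + rewrite Hpow. auto.
    + intros d. rewrite Hpow. intros [Hd HBd].
      exact (basis_unique_odd B hB o d HBo HBd Hodd Hd).
  - assert (Hpow : forall z, 2 ^ Z.of_nat (S i) * z = 2 * (2 ^ Z.of_nat i * z)).
    { intros z. rewrite Nat2Z.inj_succ, Z.pow_succ_r by lia. ring. }
    destruct (IH _ (basis_halve B hB)) as [d [Hd Hunique]]. exists d.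
    split.
    + rewrite Hpow. exact Hd.
    + intros m. rewrite Hpow. apply Hunique.
Qed.

Lemma odd_part_decomposition (b : Z) : b <> 0 -> exists i m, Z.Odd m /\ b = 2 ^ Z.of_nat i * m.
Proof.
  remember (Z.abs_nat b) as k eqn:Hk. revert b Hk.
  induction k as [k IH] using lt_wf_ind. intros b Hk Hb.
  destruct (Z.Even_or_Odd b) as [[c Hc]|Hodd].
  - destruct (IH (Z.abs_nat c) ltac:(lia) c eq_refl ltac:(lia)) as [i [m [Hm Hcm]]].
    exists (S i), m. split; [assumption|].
    rewrite Nat2Z.inj_succ, Z.pow_succ_r by lia. rewrite Hc, Hcm. ring.
  - exists O, b. split; [assumption|]. change (2 ^ Z.of_nat 0) with 1. ring.
Qed.

Theorem mainTheorem8 (B : Z -> Prop) (hB : is_basis B) :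
  exists d : nat -> Z,
    (forall i : nat, Z.Odd (d i)) /\
    (forall b : Z, B b <-> exists i : nat, b = 2 ^ (Z.of_nat i) * d i).
Proof.
  set (d := fun i => proj1_sig (constructive_indefinite_description _ (basis_level i B hB))).
  assert (Hd : forall i, (Z.Odd (d i) /\ B (2 ^ Z.of_nat i * d i))
                         /\ forall m, Z.Odd m /\ B (2 ^ Z.of_nat i * m) -> d i = m)
    by (intros i; exact (proj2_sig (constructive_indefinite_description _ (basis_level i B hB)))).
  exists d. split; [intros i; apply Hd|]. intros b. split.
  - intros HBb.
    assert (Hb0 : b <> 0) by (intros ->; exact (basis_not_zero B hB HBb)).
    destruct (odd_part_decomposition b Hb0) as [i [m [Hm ->]]].
    exists i. f_equal. symmetry. apply Hd. auto.
  - intros [i ->]. apply Hd.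
Qed.
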